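(* Let $G$ be any group and $E$ a real Banach space. Then: (1) $KAM(G;E)\subseteq KJ(G;E)$, $PAM(G;E)\subseteq PJ(G;E)$, and $\mathrm{Hom}(G;E)\subseteq J_0(G;E)$. (2) If $f\in PJ(G;E)$ and $f(xy)=f(yx)$ for all $x,y\in G$, then $f\in PAM(G;E)$.
   Context: $KJ(G;E)$: functions $f\colon G\to E$ such that for some $c>0$, $\|f(xy)+f(xy^{-1})-2f(x)\|\le c$ for all $x,y\in G$. $PJ(G;E)$: those $f\in KJ(G;E)$ with $f(x^n)=nf(x)$ for all $x\in G,n\in\mathbb{Z}$. $J_0(G;E)$: functions $f\colon G\to E$ with $f(xy)+f(xy^{-1})=2f(x)$ for all $x,y$ and $f(1)=0$. $KAM(G;E)$: functions $f\colon G\to E$ such that $\{f(xy)-f(x)-f(y): x,y\in G\}$ is bounded. $PAM(G;E)$: those $f\in KAM(G;E)$ with $f(x^n)=nf(x)$ for all $x\in G$, $n\in\mathbb{Z}$. $\mathrm{Hom}(G;E)$: homomorphisms from $G$ to the additive group of $E$. *)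

From HB Require Import structures.
From mathcomp Require Import all_boot all_order all_algebra.
From mathcomp Require Import all_classical all_reals all_analysis.
Set Implicit Arguments. Unset Strict Implicit. Unset Printing Implicit Defensive.
Import Order.TTheory GRing.Theory Num.Theory.
Import numFieldNormedType.Exports.
Local Open Scope ring_scope.

(* An arbitrary (possibly infinite) group is a [groupType] from mathcomp's
   monoid.v (written multiplicatively, notations in %g scope).  A real Banach
   space is a [completeNormedModType R] with [R : realType]. *)

Definition gexpz (G : groupType) (x : G) (n : int) : G :=
  match n with
  | Posz k => (x ^+ k)%g
  | Negz k => ((x ^+ k.+1)^-1)%g
  end.

Section Classes.
Variables (R : realType) (G : groupType) (E : normedModType R).

Definition KJ (f : G -> E) : Prop :=
  exists c : R, forall x y : G,
    `| f (x * y)%g + f (x * y^-1)%g - f x *+ 2 | <= c.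

Definition PJ (f : G -> E) : Prop :=
  KJ f /\ forall (x : G) (n : int), f (gexpz x n) = f x *~ n.

Definition J0 (f : G -> E) : Prop :=
  (forall x y : G, f (x * y)%g + f (x * y^-1)%g = f x *+ 2) /\ f 1%g = 0.

Definition KAM (f : G -> E) : Prop :=
  exists c : R, forall x y : G, `| f (x * y)%g - f x - f y | <= c.

Definition PAM (f : G -> E) : Prop :=
  KAM f /\ forall (x : G) (n : int), f (gexpz x n) = f x *~ n.

Definition HomG (f : G -> E) : Prop :=
  forall x y : G, f (x * y)%g = f x + f y.

End Classes.

From HB Require Import structures.
From mathcomp Require Import all_boot all_order all_algebra.
From mathcomp Require Import all_classical all_reals all_analysis.
Import Order.TTheory GRing.Theory Num.Theory.
Import numFieldNormedType.Exports.
Set Implicit Arguments.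
Unset Strict Implicit.
Unset Printing Implicit Defensive.

Local Open Scope ring_scope.

(* A quasimorphism has bounded Jensen defect because the Jensen defect at
   (x, y) is a signed sum of four Cauchy defects.  Conversely, for an odd
   function with f(xy) = f(yx), the Jensen defects at (x, y) and (y, x) add up
   to twice the Cauchy defect at (x, y), so bounded Jensen defect gives a
   quasimorphism with the same bound. *)

Section Defects.
Variables (G : groupType) (V : zmodType).
Implicit Types (f : G -> V) (x y : G).

Definition cauchy_defect f x y := f (x * y)%g - f x - f y.

Definition jensen_defect f x y := f (x * y)%g + f (x * y^-1)%g - f x *+ 2.

Lemma jensen_defectE f x y :
  jensen_defect f x y = cauchy_defect f x y + cauchy_defect f x y^-1
                        - cauchy_defect f y y^-1 - cauchy_defect f 1 1.
Proof.
rewrite /jensen_defect /cauchy_defect mulgV mul1g subrr sub0r opprK.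
move: (f (x * y)%g) (f (x * y^-1)%g) (f x) (f y) (f y^-1%g) (f 1%g).
move=> a b u v w o; rewrite -(addrA o) -opprD opprB addrA subrK.
by rewrite addrACA !subrK addrACA -opprD mulr2n.
Qed.

Lemma jensen_defect_sym f x y :
  (forall z, f z^-1%g = - f z) -> f (y * x)%g = f (x * y)%g ->
  jensen_defect f x y + jensen_defect f y x = cauchy_defect f x y *+ 2.
Proof.
move=> f_odd fC; rewrite /jensen_defect /cauchy_defect fC -invgF f_odd.
move: (f (x * y)%g) (f (y * x^-1)%g) (f x) (f y) => a b u v.
rewrite !mulr2n addrACA (addrACA a (- b)) addNr addr0 -!opprD.
by rewrite -(addrA a (- u)) -opprD addrACA -opprD (addrACA u u).
Qed.

Lemma morph_cauchy_defect0 f :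
  {morph f : x y / (x * y)%g >-> x + y} -> forall x y, cauchy_defect f x y = 0.
Proof. by move=> fM x y; rewrite /cauchy_defect fM -addrA -opprD subrr. Qed.

End Defects.

Definition homogeneous (G : groupType) (V : zmodType) (f : G -> V) :=
  forall (x : G) (n : int), f (gexpz x n) = f x *~ n.

Lemma homogeneous_odd (G : groupType) (V : zmodType) (f : G -> V) :
  homogeneous f -> forall x : G, f x^-1%g = - f x.
Proof. by move=> fhom x; have := fhom x (-1); rewrite /= expg1 mulrN1z. Qed.

Section Classes.
Variables (R : realType) (G : groupType) (E : normedModType R).
Implicit Types f : G -> E.

Lemma KAM_KJ f : KAM f -> KJ f.
Proof.
move=> [c fc]; exists (c + c + c + c) => x y.
rewrite -/(jensen_defect f x y) jensen_defectE.
apply: le_trans (ler_normB _ _) (lerD _ (fc 1%g 1%g)).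
apply: le_trans (ler_normB _ _) (lerD _ (fc y y^-1%g)).
exact: (le_trans (ler_normD _ _) (lerD (fc _ _) (fc _ _))).
Qed.

Lemma PAM_PJ f : PAM f -> PJ f.
Proof. by move=> [/KAM_KJ fKJ fhom]. Qed.

Lemma HomG_J0 f : HomG f -> J0 f.
Proof.
move=> fM; have f1 : f 1%g = 0.
  by apply: (addrI (f 1%g)); rewrite addr0 -fM mul1g.
split=> // x y; apply/eqP; rewrite -subr_eq0.
rewrite -/(jensen_defect f x y) jensen_defectE.
by rewrite !morph_cauchy_defect0 // !subr0 addr0.
Qed.

Lemma odd_conj_invariant_KJ_KAM f : (forall x : G, f x^-1%g = - f x) ->
  (forall x y : G, f (x * y)%g = f (y * x)%g) -> KJ f -> KAM f.
Proof.
move=> f_odd fC [c fc]; exists c => x y.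
rewrite -/(cauchy_defect f x y).
suff : `|cauchy_defect f x y| *+ 2 <= c *+ 2 by rewrite lerMn2r.
rewrite -normrMn -jensen_defect_sym // mulr2n.
exact: le_trans (ler_normD _ _) (lerD (fc x y) (fc y x)).
Qed.

Lemma conj_invariant_PJ_PAM f :
  PJ f -> (forall x y : G, f (x * y)%g = f (y * x)%g) -> PAM f.
Proof.
move=> [fKJ fhom] fC; split=> //.
exact: odd_conj_invariant_KJ_KAM (homogeneous_odd fhom) fC fKJ.
Qed.

End Classes.

Theorem theorem2p16 (R : realType) (G : groupType) (E : completeNormedModType R) :
  [/\ (forall f : G -> E, KAM f -> KJ f),
      (forall f : G -> E, PAM f -> PJ f),
      (forall f : G -> E, HomG f -> J0 f)
    & (forall f : G -> E, PJ f -> (forall x y : G, f (x * y)%g = f (y * x)%g) ->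
         PAM f)].
Proof.
split; [exact: KAM_KJ | exact: PAM_PJ | exact: HomG_J0 | exact: conj_invariant_PJ_PAM].
Qed.
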